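(* Let $\mathbb{F}\in\{\mathbb{R},\mathbb{C}\}$, let $m\le n\le 2m$, and let $A_1,\dots,A_m$ be $2\times n$ matrices over $\mathbb{F}$, viewed as the $2\times n\times m$ tensor $(A_1;\dots;A_m)$. Suppose $\dim\langle A_1,\dots,A_m\rangle=m$. Let $\ell\le\lfloor n/2\rfloor$ be an integer such that for every choice of scalars $c_{j,t}\in\mathbb{F}$ ($1\le j\le\ell$, $\ell+1\le t\le m$), setting $A'_j=A_j+c_{j,\ell+1}A_{\ell+1}+\cdots+c_{j,m}A_m$, the $n\times 2\ell$ matrix $({A'_1}^T,\dots,{A'_\ell}^T)$ has rank $2\ell$. Then $\mathrm{rank}_{\mathbb{F}}(A_1;\dots;A_m)\ge m+\ell$.
   Context: $(A_1;\dots;A_r)$ denotes the $p\times n\times r$ tensor whose $k$-th slice is the $p\times n$ matrix $A_k$; $(X_1,\dots,X_r)$ denotes horizontal concatenation of matrices; $\langle A_1,\dots,A_m\rangle$ is the $\mathbb{F}$-linear span of the matrices. A rank-one tensor is one whose slices are $\gamma_k\,\mathbf{a}\mathbf{b}^T$ ($k=1,\dots,r$) for fixed nonzero vectors $\mathbf{a},\mathbf{b}$ and a nonzero vector $(\gamma_1,\dots,\gamma_r)$; $\mathrm{rank}_{\mathbb{F}}$ of a tensor is the minimal number of rank-one tensors over $\mathbb{F}$ summing (slicewise) to it. *)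

From HB Require Import structures.
From mathcomp Require Import all_boot all_order all_algebra.
Set Implicit Arguments. Unset Strict Implicit. Unset Printing Implicit Defensive.
Import Order.TTheory GRing.Theory Num.Theory.
Local Open Scope ring_scope.

(* A p x n x r tensor (A_1; ...; A_r) is represented by its family of
   slices  T : 'I_r -> 'M[F]_(p, n)  (slice k is T k). *)

Definition rank_one_tensor (F : fieldType) (p n r : nat)
    (T : 'I_r -> 'M[F]_(p, n)) : Prop :=
  exists (a : 'cV[F]_p) (b : 'cV[F]_n) (g : 'I_r -> F),
    [/\ a != 0, b != 0, (exists k, g k != 0)
      & forall k, T k = g k *: (a *m b^T)].

Definition tensor_rank_le (F : fieldType) (p n r : nat)
    (T : 'I_r -> 'M[F]_(p, n)) (k : nat) : Prop :=
  exists S : 'I_k -> 'I_r -> 'M[F]_(p, n),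
    (forall i, rank_one_tensor (S i)) /\
    (forall t, T t = \sum_(i < k) S i t).

Definition tensor_rank_ge (F : fieldType) (p n r : nat)
    (T : 'I_r -> 'M[F]_(p, n)) (k : nat) : Prop :=
  forall k', tensor_rank_le T k' -> (k <= k')%N.

(* the slice A_j (0-based index j, as a nat); 0 if out of range *)
Definition slice (F : fieldType) (p n m : nat)
    (A : 'I_m -> 'M[F]_(p, n)) (j : nat) : 'M[F]_(p, n) :=
  odflt 0 (omap A (insub j)).

(* A'_j = A_j + sum_{t >= l} c_{j,t} A_t   (0-based: j < l, l <= t < m) *)
Definition Aprime (F : fieldType) (p n m l : nat)
    (A : 'I_m -> 'M[F]_(p, n)) (c : 'I_l -> 'I_m -> F) (j : 'I_l)
    : 'M[F]_(p, n) :=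
  slice A j + \sum_(t < m | (l <= t)%N) c j t *: A t.

Definition Claim6 (F : fieldType) : Prop :=
  forall (m n l : nat) (A : 'I_m -> 'M[F]_(2, n)),
    (m <= n <= 2 * m)%N ->
    \rank (\matrix_(i < m) mxvec (A i)) = m ->
    (l <= n./2)%N ->
    (forall c : 'I_l -> 'I_m -> F,
        \rank (\mxrow_(j < l) (Aprime A c j)^T) = (2 * l)%N) ->
    tensor_rank_ge A (m + l).

From HB Require Import structures.
From mathcomp Require Import all_boot all_order all_algebra.
From mathcomp Require Import zify.
Set Implicit Arguments. Unset Strict Implicit. Unset Printing Implicit Defensive.
Import Order.TTheory GRing.Theory Num.Theory.
Local Open Scope ring_scope.

(* Proof idea (valid over an arbitrary field F).  Take a decomposition
   A_t = sum_{i<k} G_{i,t} a_i b_i^T into k rank-one terms.  Since the slices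
   are linearly independent, the k x m coefficient matrix G has rank m, hence
   its last m - l columns have an invertible (m - l) x (m - l) block on some
   rows f(0), ..., f(m-l-1).  Using this block we choose, for each j < l,
   coefficients c_{j,t} (t >= l) such that A'_j = A_j + sum_t c_{j,t} A_t is
   a combination of the terms a_i b_i^T with i outside the image of f only.
   Then the columns of every (A'_j)^T lie in the span of the b_i with i not in
   the image of f, a space of dimension at most k - (m - l).  The rank
   hypothesis gives 2l <= k - (m - l), i.e. k >= m + l. *)

Lemma mxsub_inj_id (R : pzSemiRingType) (k d : nat) (f : 'I_d -> 'I_k) :
  injective f -> mxsub f f (1%:M : 'M[R]_k) = 1%:M.
Proof. by move=> inj_f; apply/matrixP => s s'; rewrite !mxE (inj_eq inj_f). Qed.

Lemma mxrank_zero_rows (F : fieldType) (k n d : nat) (B : 'M[F]_(k, n))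
    (f : 'I_d -> 'I_k) :
  injective f -> (forall s, row (f s) B = 0) -> (\rank B + d <= k)%N.
Proof.
move=> inj_f B0; pose R : 'M[F]_(d, k) := rowsub f 1%:M.
have RB0 : R *m B = 0.
  by apply/row_matrixP => s; rewrite -rowsubE row_rowsub B0 row0.
have rkR : \rank R = d.
  have RC1 : R *m colsub f 1%:M = 1%:M by rewrite -mxsub_mul mulmx1 (mxsub_inj_id F inj_f).
  apply/eqP; rewrite eqn_leq rank_leq_row -[X in (X <= _)%N](mxrank1 F d).
  by rewrite -RC1 mxrankM_maxl.
by have := mxrank_mul_min R B; rewrite RB0 mxrank0 rkR; lia.
Qed.

Lemma row_elimination (F : fieldType) (k m l : nat) (G : 'M[F]_(k, m))
    (lm : (l <= m)%N) :
  row_full G ->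
  exists (f : 'I_(m - l) -> 'I_k) (y : 'I_l -> 'cV[F]_m),
    [/\ injective f,
        forall j (t : 'I_m), (t < l)%N -> y j t 0 = 0
      & forall j s, (G *m (delta_mx (widen_ord lm j) 0 + y j)) (f s) 0 = 0].
Proof.
move=> /row_fullP [L LG].
have shift_lt (s : 'I_(m - l)) : (s + l < m)%N by rewrite addnC -ltn_subRL.
pose h s : 'I_m := Ordinal (shift_lt s).
have inj_h : injective h.
  by move=> s s' /(congr1 val) /= /addIn /val_inj.
(* P embeds 'cV_(m - l) as the vectors supported on the last m - l indices *)
pose P : 'M[F]_(m, m - l) := colsub h 1%:M.
pose H := G *m P.
have fullH : row_full H.
  apply/row_fullP; exists (rowsub h 1%:M *m L).
  by rewrite mulmxA -(mulmxA _ L) LG mulmx1 -mxsub_mul mul1mx mxsub_inj_id.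
pose f := fullrankfun fullH; pose Hs := rowsub f H.
have Hs_unit : Hs \in unitmx by apply: fullrowsub_unit.
pose e j : 'cV[F]_m := delta_mx (widen_ord lm j) 0.
(* y_j = - P Hs^-1 (rows f of G) e_j cancels (rows f of G) e_j *)
exists f, (fun j => - (P *m (invmx Hs *m (rowsub f G *m e j)))).
split=> [||j s]; first exact: fullrankfun_inj.
  move=> j t tl; rewrite mxE [_ t 0]mxE big1 ?oppr0 // => s _.
  rewrite /P !mxE; case: (t =P h s) => [tE|_]; last by rewrite mul0r.
  by move: tl; rewrite tE /= ltnNge leq_addl.
have elim0 : rowsub f G *m (e j - P *m (invmx Hs *m (rowsub f G *m e j))) = 0.
  by rewrite mulmxBr mulmxA [rowsub f G *m P]mul_rowsub_mx -/H -/Hs mulKVmx // subrr.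
by have := congr1 (fun M : 'cV_(m - l) => M s 0) elim0; rewrite mul_rowsub_mx !mxE.
Qed.

Lemma mxrow_tr_comb_rank (F : fieldType) (p n k l : nat)
    (a : 'I_k -> 'cV[F]_p) (b : 'I_k -> 'cV[F]_n) (Y : 'I_l -> 'cV[F]_k)
    (Z : pred 'I_k) :
  (forall j i, Z i -> Y j i 0 = 0) ->
  (\rank (\mxrow_(j < l) (\sum_i Y j i 0 *: (a i *m (b i)^T))^T)
     <= \rank (\matrix_(i < k) (if Z i then 0%R else (b i)^T)))%N.
Proof.
move=> YZ; set Bz := \matrix_(i < k) _.
pose Q j : 'M[F]_(k, p) := \matrix_(i, r) (Y j i 0 * a i r 0).
have -> : \mxrow_(j < l) (\sum_i Y j i 0 *: (a i *m (b i)^T))^T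
          = Bz^T *m \mxrow_j Q j.
  rewrite mul_mxrow; apply: eq_mxrow => j; apply/matrixP => u r.
  rewrite !mxE summxE; apply: eq_bigr => i _; rewrite !mxE.
  case: (boolP (Z i)) => [Zi | nZi]; first by rewrite YZ // !mxE !mul0r.
  by rewrite big_ord1 !mxE [RHS]mulrC -mulrA.
by rewrite -[X in (_ <= X)%N]mxrank_tr mxrankM_maxl.
Qed.

Lemma tensor_rank_le_coef (F : fieldType) (p n r k : nat)
    (T : 'I_r -> 'M[F]_(p, n)) :
  tensor_rank_le T k ->
  exists (a : 'I_k -> 'cV[F]_p) (b : 'I_k -> 'cV[F]_n) (G : 'M[F]_(k, r)),
    forall t, T t = \sum_i G i t *: (a i *m (b i)^T).
Proof.
move=> [S [S1 TS]].
have /fin_all_exists [abg Habg] : forall i, exists abg :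
    'cV[F]_p * 'cV[F]_n * {ffun 'I_r -> F},
    forall t, S i t = abg.2 t *: (abg.1.1 *m abg.1.2^T).
  move=> i; have [a [b [g [_ _ _ Sg]]]] := S1 i.
  by exists (a, b, [ffun t => g t]) => t /=; rewrite ffunE.
exists (fun i => (abg i).1.1), (fun i => (abg i).1.2).
exists (\matrix_(i, t) (abg i).2 t) => t.
by rewrite TS; apply: eq_bigr => i _; rewrite Habg mxE.
Qed.

Section Decomposition.
Variables (F : fieldType) (p n r k : nat) (T : 'I_r -> 'M[F]_(p, n)).
Variables (a : 'I_k -> 'cV[F]_p) (b : 'I_k -> 'cV[F]_n) (G : 'M[F]_(k, r)).
Hypothesis TG : forall t, T t = \sum_i G i t *: (a i *m (b i)^T).

Lemma slices_comb (x : 'cV[F]_r) :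
  \sum_t x t 0 *: T t = \sum_i (G *m x) i 0 *: (a i *m (b i)^T).
Proof.
under eq_bigr => t _ do rewrite TG scaler_sumr.
rewrite exchange_big; apply: eq_bigr => i _.
rewrite mxE scaler_suml; apply: eq_bigr => t _.
by rewrite scalerA mulrC.
Qed.

Lemma slices_rank : (\rank (\matrix_(t < r) mxvec (T t)) <= \rank G)%N.
Proof.
pose Bm : 'M[F]_(k, p * n) := \matrix_i mxvec (a i *m (b i)^T).
have -> : \matrix_(t < r) mxvec (T t) = G^T *m Bm.
  apply/matrixP => t u; rewrite !mxE TG linear_sum summxE.
  by apply: eq_bigr => i _; rewrite linearZ !mxE.
by rewrite -[X in (_ <= X)%N]mxrank_tr mxrankM_maxl.
Qed.

End Decomposition.

Lemma Aprime_comb (F : fieldType) (p n m l : nat) (A : 'I_m -> 'M[F]_(p, n))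
    (lm : (l <= m)%N) (y : 'I_l -> 'cV[F]_m) :
  (forall j (t : 'I_m), (t < l)%N -> y j t 0 = 0) ->
  forall j, Aprime A (fun j t => y j t 0) j
            = \sum_t (delta_mx (widen_ord lm j) 0 + y j) t 0 *: A t.
Proof.
move=> y_supp j; rewrite /Aprime.
under [RHS]eq_bigr => t _ do rewrite mxE scalerDl.
rewrite big_split /=; congr (_ + _).
  rewrite (bigD1 (widen_ord lm j)) //= big1 ?addr0 => [|t /negbTE tj].
    rewrite mxE !eqxx scale1r /slice insubT /=; first exact: leq_trans lm.
    by move=> jm; congr (A _); apply: val_inj.
  by rewrite mxE tj scale0r.
rewrite [RHS](bigID (fun t : 'I_m => (l <= t)%N)) /= [X in _ = _ + X]big1 ?addr0 //.
by move=> t; rewrite -ltnNge => tl; rewrite y_supp // scale0r.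
Qed.

Lemma claim6_field (F : fieldType) : Claim6 F.
Proof.
move=> m n l A /andP[_ n_le] rkA l_le rkA' k decA.
have [a [b [G AG]]] := tensor_rank_le_coef decA.
have fullG : row_full G.
  by rewrite /row_full eqn_leq rank_leq_col -{1}rkA (slices_rank AG).
have lm : (l <= m)%N.
  by apply: leq_trans l_le _; rewrite -(half_double m) -mul2n half_leq.
have [f [y [inj_f y_supp y_elim]]] := row_elimination lm fullG.
pose X j := delta_mx (widen_ord lm j) 0 + y j.
have A'_comb j : Aprime A (fun j t => y j t 0) j
                 = \sum_i (G *m X j) i 0 *: (a i *m (b i)^T).
  by rewrite Aprime_comb // (slices_comb AG).
pose Bz := \matrix_(i < k) (if i \in codom f then 0%R else (b i)^T).
have rk_A' : (2 * l <= \rank Bz)%N.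
  rewrite -(rkA' (fun j t => y j t 0)) (eq_mxrow (fun j => congr1 trmx (A'_comb j))).
  by apply: mxrow_tr_comb_rank => j i /codomP [s ->]; apply: y_elim.
have rk_Bz : (\rank Bz + (m - l) <= k)%N.
  by apply: mxrank_zero_rows inj_f _ => s; rewrite rowK codom_f.
lia.
Qed.

Theorem mainTheorem6 :
  (forall F : rcfType, Claim6 F) /\ (forall F : numClosedFieldType, Claim6 F).
Proof. by split => F; apply: claim6_field. Qed.
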